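(* Let $G$ be an abelian group and let $M,N$ be two matroids over $G$ of the same rank $n$. Let $\mathcal{M}=\{a_1,\dots,a_n\}$ be a basis of $M$. Assume that for every $J\subseteq[n]$, $$r_N\Big(\bigcap_{i\in J}\big((-a_i+E(M))\cap E(N)\big)\Big)\le n-|J|.$$ Then $\mathcal{M}$ is matched to some basis of $N$.
   Context: A matroid over $G$ is a matroid $M$ whose finite ground set $E(M)$ is a subset of $G$; all matroids are assumed loopless. $r_N$ is the rank function of $N$: $r_N(X)=\max\{|X\cap I|: I \text{ independent in } N\}$. $-a+X=\{-a+x:x\in X\}$. For bases $\mathcal{M}=\{a_1,\dots,a_n\}$ of $M$ and $\mathcal{N}=\{b_1,\dots,b_n\}$ of $N$ (with $r(M)=r(N)=n>0$), $\mathcal{M}$ is matched to $\mathcal{N}$ if there is a permutation $\pi\in S_n$ with $a_i+b_{\pi(i)}\notin E(M)$ for all $i$. *)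

From HB Require Import structures.
From mathcomp Require Import all_boot all_order all_algebra all_fingroup.
From mathcomp Require Import finmap.
Set Implicit Arguments. Unset Strict Implicit. Unset Printing Implicit Defensive.
Import GRing.Theory.
Local Open Scope fset_scope.
Local Open Scope ring_scope.

Record matroid (G : zmodType) := Matroid {
  ground : {fset G};
  indep : {fset G} -> bool;
  indep_sub : forall I, indep I -> I `<=` ground;
  indep0 : indep fset0;
  indep_hered : forall I J, J `<=` I -> indep I -> indep J;
  indep_aug : forall I J, indep I -> indep J -> (#|` I| < #|` J|)%N ->
     exists2 x, x \in J `\` I & indep (x |` I);
  loopless : forall x, x \in ground -> indep [fset x]
}.

Definition mrank (G : zmodType) (N : matroid G) (X : {fset G}) : nat :=
  \max_(I <- fpowerset (ground N) | indep N I) #|` X `&` I|.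

Definition mrk (G : zmodType) (N : matroid G) : nat := mrank N (ground N).

Definition is_basis (G : zmodType) (N : matroid G) (B : {fset G}) : Prop :=
  indep N B /\ forall x, x \in ground N -> x \notin B -> ~~ indep N (x |` B).

Definition shift (G : zmodType) (a : G) (X : {fset G}) : {fset G} :=
  [fset - a + x | x in X].

(* \bigcap_{i in J} ((-a_i + E(M)) ∩ E(N)); the empty intersection is E(N). *)
Definition inter_shifts (G : zmodType) (M N : matroid G) (n : nat)
    (a : 'I_n -> G) (J : {set 'I_n}) : {fset G} :=
  foldr (fun i S => S `&` (shift (a i) (ground M) `&` ground N))
        (ground N) (enum J).

Definition matched (G : zmodType) (M : matroid G) (n : nat)
    (a b : 'I_n -> G) : Prop :=
  exists pi : 'S_n, forall i, a i + b (pi i) \notin ground M.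

(* Put A_i = {b in E(N) | a_i + b \notin E(M)}.  An element of E(N) outside
   the union of the A_i, i in J, lies in the intersection of the shifts
   -a_i + E(M), so by subadditivity of r_N the hypothesis yields Rado's
   condition r_N(U_{i in J} A_i) >= |J| for every J.  Rado's theorem then gives
   distinct b_i in A_i forming an independent set of N, which is a basis since
   it has r(N) elements, and the identity permutation matches {a_i} to {b_i}.

   Rado's theorem is proved by Rado's reduction: if some A_i has two elements
   x1, x2, removing one of them preserves the condition: violating sets J1, J2
   for both removals would, by submodularity of r_N applied to the
   corresponding unions, force a violation for J1 u J2 or for (J1 n J2) - {i}.
   When all A_i are singletons the condition says that they form an
   independent transversal. *)

From HB Require Import structures.
From mathcomp Require Import all_boot all_order all_algebra all_fingroup.
From mathcomp Require Import finmap zify.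
Set Implicit Arguments.
Unset Strict Implicit.
Unset Printing Implicit Defensive.
Import GRing.Theory.
Local Open Scope fset_scope.

Lemma card_imfset_ord (T : choiceType) n (c : 'I_n -> T) : injective c ->
  #|` [fset c i | i in 'I_n]| = n.
Proof.
move=> inj_c; rewrite card_imfset //= -[RHS](card_ord n) cardE.
by apply/perm_size/uniq_perm; rewrite ?enum_finmem_uniq ?enum_uniq.
Qed.

Lemma cardfs_gt1_distinct (T : choiceType) (A : {fset T}) :
  1 < #|` A| -> exists x1 x2, [/\ x1 != x2, x1 \in A & x2 \in A].
Proof.
move=> gt1; have /fset0Pn [x1 x1A] : A != fset0 by rewrite -cardfs_gt0 ltnW.
have /fset0Pn [x2 /fsetD1P [x21 x2A]] : A `\ x1 != fset0.
  by move: gt1; rewrite (cardfsD1 x1) x1A add1n ltnS cardfs_gt0.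
by exists x1, x2; rewrite eq_sym.
Qed.

Section Rank.
Variables (G : zmodType) (N : matroid G).
Local Notation r := (mrank N).

Lemma mrank_witness X : exists I, [/\ indep N I, I `<=` X & #|` I| = r X].
Proof.
rewrite /mrank big_seq_fsetE /=.
have E0 : fset0 \in fpowerset (ground N) by rewrite fpowersetE fsub0set.
rewrite (bigmax_eq_arg [` E0]) ?indep0 //.
case: arg_maxnP => [|[I /= _] indI _]; first exact: indep0.
exists (X `&` I); split; rewrite ?fsubsetIl //.
by apply: indep_hered indI; rewrite fsubsetIr.
Qed.

Lemma indep_card_le_mrank I X : indep N I -> I `<=` X -> #|` I| <= r X.
Proof.
move=> indI sIX; rewrite -(fsetIidPr sIX).
by apply: leq_bigmax_seq => //; rewrite fpowersetE indep_sub.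
Qed.

Lemma mrank_le_card X : r X <= #|` X|.
Proof. by have [I [_ sIX <-]] := mrank_witness X; apply: fsubset_leq_card. Qed.

Lemma mrank_mono X Y : X `<=` Y -> r X <= r Y.
Proof.
move=> sXY; have [I [indI sIX <-]] := mrank_witness X.
by apply: indep_card_le_mrank (fsubset_trans sIX sXY).
Qed.

Lemma card_le_mrank_indep (X : {fset G}) : #|` X| <= r X -> indep N X.
Proof.
move=> leXr; have [I [indI sIX eqIr]] := mrank_witness X.
suff -> : X = I by [].
by symmetry; apply/eqP; rewrite eqEfcard sIX eqIr.
Qed.

Lemma indep_extend_mrank I X : indep N I -> I `<=` X ->
  exists B, [/\ indep N B, I `<=` B, B `<=` X & #|` B| = r X].
Proof.
have [J [indJ sJX cardJ]] := mrank_witness X.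
have [k] := ubnP (r X - #|` I|); elim: k I => // k IH I ltk indI sIX.
have [leXI | ltIX] := leqP (r X) #|` I|.
  by exists I; split => //; apply/eqP; rewrite eqn_leq leXI indep_card_le_mrank.
have [|x /fsetDP [xJ xI] indxI] := indep_aug indI indJ; first by rewrite cardJ.
have [||B [indB sxIB sBX cardB]] := IH (x |` I) _ indxI.
- by rewrite cardfsU1 xI; lia.
- by rewrite fsubUset fsub1set sIX (fsubsetP sJX).
by exists B; split => //; apply: fsubset_trans sxIB; rewrite fsubsetU1.
Qed.

Lemma mrank_submod X Y : r (X `|` Y) + r (X `&` Y) <= r X + r Y.
Proof.
have [I [indI sIXY <-]] := mrank_witness (X `&` Y).
have sIXuY : I `<=` X `|` Y.
  by apply: fsubset_trans sIXY (fsubset_trans (fsubsetIl _ _) (fsubsetUl _ _)).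
have [B [indB sIB sBXY <-]] := indep_extend_mrank indI sIXuY.
have indBI Z : indep N (B `&` Z) by apply: indep_hered indB; rewrite fsubsetIl.
have sIBXY : I `<=` (B `&` X) `&` (B `&` Y) by rewrite fsetIACA fsetIid fsubsetI sIB.
rewrite -(fsetIidPl sBXY) fsetIUr.
apply: (@leq_trans (#|` B `&` X| + #|` B `&` Y|)).
  by rewrite -(cardfsUI (B `&` X)) leq_add2l fsubset_leq_card.
by rewrite leq_add // indep_card_le_mrank ?indBI ?fsubsetIr.
Qed.

Lemma mrank_subU X Y : r (X `|` Y) <= r X + r Y.
Proof. exact: leq_trans (leq_addr _ _) (mrank_submod X Y). Qed.

Lemma indep_card_mrk_basis B : indep N B -> #|` B| = mrk N -> is_basis N B.
Proof.
move=> indB cardB; split => // x xE xB; apply/negP => indxB.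
have := indep_card_le_mrank indxB (indep_sub indxB).
by rewrite cardfsU1 xB cardB ltnn.
Qed.

End Rank.

Section Rado.
Variables (G : zmodType) (N : matroid G) (n : nat).
Local Notation r := (mrank N).
Implicit Types (A B : 'I_n -> {fset G}) (J : {set 'I_n}).

Definition cover A J : {fset G} := \bigcup_(i in J) A i.

Lemma coverP A J y : reflect (exists2 i, i \in J & y \in A i) (y \in cover A J).
Proof.
apply: (iffP (bigfcupP _ _ _ _)) => [[i /andP [_ iJ] yA]|[i iJ yA]].
  by exists i.
by exists i; rewrite ?mem_index_enum.
Qed.

Definition rado_condition A : bool := [forall J : {set 'I_n}, #|J| <= r (cover A J)].

Definition has_indep_transversal A : Prop :=
  exists c : 'I_n -> G,
    [/\ injective c, forall i, c i \in A i & indep N [fset c i | i in 'I_n]].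

Lemma indep_transversal_sub A B :
  (forall i, A i `<=` B i) -> has_indep_transversal A -> has_indep_transversal B.
Proof.
move=> sAB [c [inj_c cA indc]]; exists c; split => // i.
exact: fsubsetP (sAB i) _ (cA i).
Qed.

Definition shrink A i0 x i : {fset G} := if i == i0 then A i0 `\ x else A i.

Lemma shrink_sub A i0 x i : shrink A i0 x i `<=` A i.
Proof. by rewrite /shrink; case: eqP => [->|_]; rewrite ?fsubD1set. Qed.

Lemma shrink_card_sum A i0 x : x \in A i0 ->
  \sum_i #|` shrink A i0 x i| < \sum_i #|` A i|.
Proof.
move=> xA; rewrite (bigD1 i0) // [X in _ < X](bigD1 i0) //=.
rewrite /shrink eqxx (cardfsD1 x (A i0)) xA add1n addSn ltnS leq_add2l.
by apply: eq_leq; apply: eq_bigr => i /negPf ->.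
Qed.

Lemma cover_shrink_in A i0 x J : i0 \in J ->
  cover (shrink A i0 x) J = (A i0 `\ x) `|` cover A (J :\ i0).
Proof.
move=> i0J; rewrite /cover (big_setD1 i0) //= {1}/shrink eqxx; congr (_ `|` _).
by apply: eq_bigr => i; rewrite !inE /shrink => /andP [/negPf ->].
Qed.

Lemma cover_shrink_notin A i0 x J : i0 \notin J ->
  cover (shrink A i0 x) J = cover A J.
Proof.
move=> i0J; apply: eq_bigr => i iJ; rewrite /shrink.
by case: eqP => // ei; rewrite -ei iJ in i0J.
Qed.

Lemma rado_violator_mem A i0 x J : rado_condition A ->
  r (cover (shrink A i0 x) J) < #|J| -> i0 \in J.
Proof.
move=> /forallP radoA; apply: contraTT => i0J.
by rewrite -leqNgt cover_shrink_notin.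
Qed.

Lemma rado_shrink A i0 x1 x2 : rado_condition A ->
  x1 != x2 -> x1 \in A i0 -> x2 \in A i0 ->
  rado_condition (shrink A i0 x1) || rado_condition (shrink A i0 x2).
Proof.
move=> radoA x12 x1A x2A; apply: contraT; rewrite negb_or.
case/andP => /forallPn [J1]; rewrite -ltnNge => viol1.
move=> /forallPn [J2]; rewrite -ltnNge => viol2.
have i0J1 := rado_violator_mem radoA viol1; have i0J2 := rado_violator_mem radoA viol2.
move: viol1 viol2; rewrite !cover_shrink_in // (cardsD1 i0 J1) (cardsD1 i0 J2).
rewrite i0J1 i0J2 !add1n !ltnS.
set K1 := J1 :\ i0; set K2 := J2 :\ i0.
set X1 := _ `|` cover A K1; set X2 := _ `|` cover A K2 => rX1 rX2.
have sU : cover A (i0 |: (K1 :|: K2)) `<=` X1 `|` X2.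
  apply/fsubsetP => y /coverP [j]; rewrite in_setU1 in_setU.
  case/or3P => [/eqP -> yA|jK1 yA|jK2 yA].
  - have [-> | yx1] := eqVneq y x1; first by rewrite !inE x12 x1A !orbT.
    by rewrite !inE yx1 yA.
  - have yK1 : y \in cover A K1 by apply/coverP; exists j.
    by apply/fsetUP; left; apply/fsetUP; right.
  - have yK2 : y \in cover A K2 by apply/coverP; exists j.
    by apply/fsetUP; right; apply/fsetUP; right.
have sI : cover A (K1 :&: K2) `<=` X1 `&` X2.
  apply/fsubsetP => y /coverP [j /setIP [jK1 jK2] yA].
  have yK1 : y \in cover A K1 by apply/coverP; exists j.
  have yK2 : y \in cover A K2 by apply/coverP; exists j.
  by rewrite !inE yK1 yK2 !orbT.
have rU := leq_trans (forallP radoA _) (mrank_mono N sU).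
have rI := leq_trans (forallP radoA _) (mrank_mono N sI).
have := leq_trans (leq_add rU rI) (leq_trans (mrank_submod N X1 X2) (leq_add rX1 rX2)).
by rewrite -(cardsUI K1 K2) cardsU1 !inE eqxx /= add1n addSn ltnn.
Qed.

Lemma rado_singletons A : rado_condition A -> (forall i, #|` A i| <= 1) ->
  has_indep_transversal A.
Proof.
move=> /forallP radoA A_small.
have /fin_all_exists [c Ac] : forall i, exists x, A i = [fset x].
  move=> i; apply/cardfs1P; rewrite eqn_leq A_small /=.
  have := radoA [set i]; rewrite cards1 /cover big_set1 => /leq_trans; apply.
  exact: mrank_le_card.
have cover_sub J i : {in J, forall j, c j = c i} -> cover A J `<=` [fset c i].
  move=> cJ; apply/fsubsetP => y /coverP [j jJ]; rewrite Ac !inE => /eqP ->.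
  by rewrite cJ.
have inj_c : injective c.
  move=> i j cij; apply/eqP; apply: contraT => ij.
  have := leq_trans (radoA [set i; j]) (mrank_le_card _ _).
  have cover_ij : cover A [set i; j] `<=` [fset c i].
    by apply: cover_sub => k; rewrite !inE => /orP [] /eqP ->.
  rewrite cards2 ij leqNgt ltnS (leq_trans (fsubset_leq_card cover_ij)) //.
  by rewrite cardfs1.
have cover_image : cover A setT `<=` [fset c i | i in 'I_n].
  by apply/fsubsetP => y /coverP [j _]; rewrite Ac inE => /eqP ->; apply: in_imfset.
exists c; split => //; first by move=> i; rewrite Ac fset11.
apply: card_le_mrank_indep; rewrite card_imfset_ord //.
apply: leq_trans (mrank_mono N cover_image).
by rewrite -[X in X <= _]card_ord -cardsT; apply: radoA.
Qed.

Theorem rado_indep_transversal A : rado_condition A -> has_indep_transversal A.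
Proof.
have [k] := ubnP (\sum_i #|` A i|); elim: k A => // k IH A sumA radoA.
have [/existsP [i0 /cardfs_gt1_distinct [x1 [x2 [x12 x1A x2A]]]] | /existsPn small] :=
  boolP [exists i, 1 < #|` A i|]; last first.
  by apply: rado_singletons => // i; rewrite leqNgt small.
have shrunk x : x \in A i0 -> rado_condition (shrink A i0 x) -> has_indep_transversal A.
  move=> xA radoAx; apply: indep_transversal_sub (shrink_sub A i0 x) (IH _ _ radoAx).
  exact: leq_trans (shrink_card_sum xA) sumA.
by case/orP: (rado_shrink radoA x12 x1A x2A) => /shrunk; apply.
Qed.

End Rado.

Lemma mem_shift (G : zmodType) (a y : G) X : (y \in shift a X) = (a + y \in X)%R.
Proof.
apply/imfsetP/idP => [[x xX ->] | ayX]; first by rewrite addNKr.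
by exists (a + y)%R; rewrite // addKr.
Qed.

Section Matchable.
Variables (G : zmodType) (M N : matroid G) (n : nat) (a : 'I_n -> G).

Definition matchable i : {fset G} := [fset y in ground N | (a i + y)%R \notin ground M].

Lemma inter_shifts_mem (J : {set 'I_n}) y : y \in ground N ->
  {in J, forall i, (a i + y)%R \in ground M} -> y \in inter_shifts M N a J.
Proof.
move=> yN yJ; have : all (fun i => (a i + y)%R \in ground M) (enum J).
  by apply/allP => i; rewrite mem_enum; apply: yJ.
rewrite /inter_shifts; elim: (enum J) => //= i s IH /andP [ayM /IH ys].
by rewrite !in_fsetI ys mem_shift ayM yN.
Qed.

Lemma ground_diff_cover_sub (J : {set 'I_n}) :
  ground N `\` cover matchable J `<=` inter_shifts M N a J.
Proof.
apply/fsubsetP => y /fsetDP [yN yU]; apply: inter_shifts_mem => // i iJ.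
by apply: contraNT yU => ayM; apply/coverP; exists i; rewrite // !inE yN.
Qed.

Lemma rado_condition_matchable : mrk N = n ->
  (forall J : {set 'I_n}, mrank N (inter_shifts M N a J) <= n - #|J|) ->
  rado_condition N matchable.
Proof.
move=> rN hyp; apply/forallP => J.
have sE : ground N `<=` cover matchable J `|` (ground N `\` cover matchable J).
  by apply/fsubsetP => y yN; rewrite in_fsetU in_fsetD yN andbT orbN.
have := leq_trans (mrank_mono N sE) (mrank_subU N _ _); rewrite -/(mrk N) rN.
have := leq_trans (mrank_mono N (ground_diff_cover_sub J)) (hyp J).
have := max_card J; rewrite card_ord; lia.
Qed.

End Matchable.

Local Open Scope ring_scope.

Theorem proposition3p7 (G : zmodType) (M N : matroid G) (n : nat)
    (a : 'I_n -> G) :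
  mrk M = n -> mrk N = n ->
  injective a -> is_basis M [fset a i | i in 'I_n] ->
  (forall J : {set 'I_n}, (mrank N (inter_shifts M N a J) <= n - #|J|)%N) ->
  exists b : 'I_n -> G,
    [/\ injective b, is_basis N [fset b i | i in 'I_n] & matched M a b].
Proof.
move=> _ rN _ _ hyp.
have [b [inj_b bA indb]] := rado_indep_transversal (rado_condition_matchable rN hyp).
exists b; split => //.
  by apply: indep_card_mrk_basis; rewrite // card_imfset_ord.
exists 1%g => i; rewrite perm1.
by have := bA i; rewrite !inE => /andP [].
Qed.
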